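(* Consider a two-player two-action game with payoffs $r_i^{jk}$ ($i\in\{1,2\}$, $j,k\in\{1,2\}$) and let $u_i=r_i^{11}+r_i^{22}-r_i^{12}-r_i^{21}$. If $u_1\neq u_2$, then the unconstrained SA-IGA self-play dynamics $\dot x=F(x)$ on $x=(p_1,p_2,w_1,w_2)\in\mathbb{R}^4$ is non-linear, i.e. the vector field $F:\mathbb{R}^4\to\mathbb{R}^4$ is not an affine function of $(p_1,p_2,w_1,w_2)$.
   Context: Two players $i\in\{1,2\}$, each with actions $1,2$; $r_i^{jk}$ is the payoff of player $i$ when player $i$ plays action $j$ and its opponent $-i$ plays action $k$. Player $i$'s mixed strategy is given by $p_i\in[0,1]$, its probability of playing action 1. The expected payoff of player $i$ is $V_i(p_1,p_2)=\sum_{j,k}\pi_i(j)\pi_{-i}(k)r_i^{jk}$ with $\pi_i(1)=p_i,\ \pi_i(2)=1-p_i$. The social payoff is $V^{soc}=\frac{1}{2}(V_1+V_2)$. Each player $i$ has a social attitude $w_i\in[0,1]$ and overall payoff $\tilde V_i=(1-w_i)V_i+w_iV^{soc}$. The unconstrained SA-IGA dynamics (both players using SA-IGA) is the system $\dot p_i=\frac{\partial \tilde V_i}{\partial p_i}$ (partial derivative with respect to the player's own $p_i$, all other variables fixed), $\dot w_i=\varepsilon\,(V_i-V^{soc})$, $i\in\{1,2\}$, where $\varepsilon>0$ is a constant (ratio of learning rates of $w$ and $p$). Write this as $\dot x=F(x)$ with $x=(p_1,p_2,w_1,w_2)$. *)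

From HB Require Import structures.
From mathcomp Require Import all_boot all_order all_algebra.
From mathcomp Require Import all_classical all_reals all_analysis.
Set Implicit Arguments. Unset Strict Implicit. Unset Printing Implicit Defensive.
Import Order.TTheory GRing.Theory Num.Theory.
Local Open Scope ring_scope.

Section SAIGA.
Variable R : realType.

(* Payoffs: [r i j k] = r_{i+1}^{(j+1)(k+1)}: payoff of player i (0-indexed)
   when it plays action j and its opponent plays action k (0-indexed). *)
Definition payoffs := 'I_2 -> 'I_2 -> 'I_2 -> R.

Definition mixed (p : R) (j : 'I_2) : R := if val j == 0%N then p else 1 - p.

Definition player1 : 'I_2 := ord0.
Definition player2 : 'I_2 := inord 1.

Definition V1 (r : payoffs) (p1 p2 : R) : R :=
  \sum_(j < 2) \sum_(k < 2) mixed p1 j * mixed p2 k * r player1 j k.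
Definition V2 (r : payoffs) (p1 p2 : R) : R :=
  \sum_(j < 2) \sum_(k < 2) mixed p2 j * mixed p1 k * r player2 j k.
Definition Vsoc (r : payoffs) (p1 p2 : R) : R := (V1 r p1 p2 + V2 r p1 p2) / 2.

Definition Vt1 (r : payoffs) (w1 p1 p2 : R) : R :=
  (1 - w1) * V1 r p1 p2 + w1 * Vsoc r p1 p2.
Definition Vt2 (r : payoffs) (w2 p1 p2 : R) : R :=
  (1 - w2) * V2 r p1 p2 + w2 * Vsoc r p1 p2.

Definition xp1 (x : 'rV[R]_4) := x ord0 (inord 0).
Definition xp2 (x : 'rV[R]_4) := x ord0 (inord 1).
Definition xw1 (x : 'rV[R]_4) := x ord0 (inord 2).
Definition xw2 (x : 'rV[R]_4) := x ord0 (inord 3).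

Definition SAIGA_field (r : payoffs) (eps : R) (x : 'rV[R]_4) : 'rV[R]_4 :=
  \row_(m < 4)
    match val m with
    | 0%N => derive1 (fun q => Vt1 r (xw1 x) q (xp2 x)) (xp1 x)
    | 1%N => derive1 (fun q => Vt2 r (xw2 x) (xp1 x) q) (xp2 x)
    | 2%N => eps * (V1 r (xp1 x) (xp2 x) - Vsoc r (xp1 x) (xp2 x))
    | _ => eps * (V2 r (xp1 x) (xp2 x) - Vsoc r (xp1 x) (xp2 x))
    end.

Definition u (r : payoffs) (i : 'I_2) : R :=
  r i (inord 0) (inord 0) + r i (inord 1) (inord 1)
  - r i (inord 0) (inord 1) - r i (inord 1) (inord 0).

Definition affine4 (G : 'rV[R]_4 -> 'rV[R]_4) : Prop :=
  exists (A : 'M[R]_4) (b : 'rV[R]_4), forall x, G x = x *m A + b.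

End SAIGA.

From mathcomp Require Import all_boot all_order all_algebra.
From mathcomp Require Import all_classical all_reals all_analysis.
From mathcomp Require Import ring.
Import GRing.Theory Num.Theory.
Local Open Scope ring_scope.

(* An affine field respects the parallelogram identity
   F(1,1) + F(0,0) = F(1,0) + F(0,1) in the (p1, p2)-plane.  The w1-component
   of F is eps (V1 - V2) / 2, and V_i is bilinear in (p1, p2) with interaction
   coefficient u_i, so the second mixed difference of that component over the
   unit square is eps (u1 - u2) / 2, which vanishes only if u1 = u2. *)

Section SAIGANonAffine.
Variable R : realType.
Implicit Types (r : payoffs R) (p q : R).

Lemma big_ord2 (F : 'I_2 -> R) : \sum_(j < 2) F j = F ord0 + F ord_max.
Proof. by rewrite big_ord_recr big_ord1; congr (F _ + _); apply: val_inj. Qed.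

Lemma inord0_ord0 : inord 0 = ord0 :> 'I_2.
Proof. by apply: val_inj; rewrite /= inordK. Qed.

Lemma inord1_ord_max : inord 1 = ord_max :> 'I_2.
Proof. by apply: val_inj; rewrite /= inordK. Qed.

Lemma affine4_parallelogram (G : 'rV[R]_4 -> 'rV[R]_4) x y x' y' :
  affine4 G -> x + y = x' + y' -> G x + G y = G x' + G y'.
Proof.
move=> [A [b HG]] Hxy.
by rewrite !HG addrACA -mulmxDl Hxy mulmxDl addrACA.
Qed.

Lemma SAIGA_field_w1 r eps x :
  SAIGA_field r eps x ord0 (inord 2) =
  eps * ((V1 r (xp1 x) (xp2 x) - V2 r (xp1 x) (xp2 x)) / 2).
Proof. by rewrite mxE /= inordK // /Vsoc; field. Qed.

Definition state p q : 'rV[R]_4 :=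
  \row_(m < 4) (if val m == 0%N then p else if val m == 1%N then q else 0).

Lemma xp1_state p q : xp1 (state p q) = p.
Proof. by rewrite /xp1 mxE /= inordK. Qed.

Lemma xp2_state p q : xp2 (state p q) = q.
Proof. by rewrite /xp2 mxE /= inordK. Qed.

Lemma state_parallelogram : state 1 1 + state 0 0 = state 1 0 + state 0 1.
Proof.
apply/rowP => m; rewrite !mxE.
by case: (val m == 0%N); case: (val m == 1%N); rewrite ?addr0 ?add0r.
Qed.

Lemma V1_mixed_difference r :
  V1 r 1 1 + V1 r 0 0 - V1 r 1 0 - V1 r 0 1 = u r player1.
Proof.
rewrite /V1 /u inord0_ord0 inord1_ord_max !big_ord2 /mixed /=.
ring.
Qed.

Lemma V2_mixed_difference r :
  V2 r 1 1 + V2 r 0 0 - V2 r 1 0 - V2 r 0 1 = u r player2.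
Proof.
rewrite /V2 /u inord0_ord0 inord1_ord_max !big_ord2 /mixed /=.
ring.
Qed.

Lemma SAIGA_field_w1_mixed_difference r eps :
  let F := SAIGA_field r eps in
  F (state 1 1) ord0 (inord 2) + F (state 0 0) ord0 (inord 2)
  - (F (state 1 0) ord0 (inord 2) + F (state 0 1) ord0 (inord 2))
  = eps * (u r player1 - u r player2) / 2.
Proof.
rewrite /= !SAIGA_field_w1 !xp1_state !xp2_state.
rewrite -V1_mixed_difference -V2_mixed_difference.
by field.
Qed.

End SAIGANonAffine.

Theorem theorem1 (R : realType) (r : payoffs R) (eps : R) :
  0 < eps -> u r player1 != u r player2 ->
  ~ affine4 (SAIGA_field r eps).
Proof.
move=> eps_gt0 u12 /affine4_parallelogram/(_ (state_parallelogram R)).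
move/(congr1 (fun v : 'rV[R]_4 => v ord0 (inord 2))).
rewrite [LHS]mxE [RHS]mxE => /eqP.
rewrite -subr_eq0 SAIGA_field_w1_mixed_difference.
rewrite !mulf_eq0 invr_eq0 pnatr_eq0 subr_eq0 (negbTE u12).
by rewrite (negbTE (lt0r_neq0 eps_gt0)).
Qed.
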